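(* Let $\mathcal{M}\subseteq\mathbb{S}^n$ and $B\in\mathbb{S}^n$. If $\mathcal{S}(\mathcal{M})$ is rank-one generated, then $$\inf_{x\in\mathbb{R}^n}\{x^\top M_0x:\ x^\top Mx\ge0\ \forall M\in\mathcal{M},\ x^\top Bx=1\}=\inf_{X\in\mathbb{S}^n}\{\langle M_0,X\rangle:\ \langle M,X\rangle\ge0\ \forall M\in\mathcal{M},\ \langle B,X\rangle=1,\ X\succeq0\}$$ for all $M_0\in\mathbb{S}^n$ for which the optimal value of the right-hand (SDP) problem is bounded from below. In particular, this equality holds whenever the feasible domain of the right-hand problem is bounded.
   Context: $\mathbb{S}^n$ denotes real symmetric $n\times n$ matrices with $\langle A,B\rangle=\mathrm{tr}(AB)$, $\mathbb{S}^n_+$ the PSD cone, $X\succeq0$ means $X$ is PSD. For $\mathcal{M}\subseteq\mathbb{S}^n$, $\mathcal{S}(\mathcal{M})=\{X\in\mathbb{S}^n_+:\langle M,X\rangle\ge0\ \forall M\in\mathcal{M}\}$. A closed convex cone $\mathcal{S}\subseteq\mathbb{S}^n_+$ is rank-one generated (ROG) if $\mathcal{S}=\mathrm{conv}(\mathcal{S}\cap\{xx^\top:x\in\mathbb{R}^n\})$. *)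

From HB Require Import structures.
From mathcomp Require Import all_boot all_order all_algebra.
From mathcomp Require Import all_classical all_reals ereal.
Set Implicit Arguments. Unset Strict Implicit. Unset Printing Implicit Defensive.
Import Order.TTheory GRing.Theory Num.Theory.
Local Open Scope ring_scope.
Local Open Scope classical_set_scope.

Section Defs.
Variables (R : realType) (n : nat).
Local Notation M := 'M[R]_n.

Definition symmx (A : M) : Prop := A^T = A.

Definition frob (A B : M) : R := \tr (A *m B).

Definition qform (A : M) (x : 'cV[R]_n) : R := (x^T *m A *m x) 0 0.

Definition psd (X : M) : Prop := symmx X /\ forall x : 'cV[R]_n, 0 <= qform X x.

Definition Scone (Ms : set M) : set M :=
  [set X | psd X /\ forall A, Ms A -> 0 <= frob A X].

Definition rank_one_set : set M := [set X | exists x : 'cV[R]_n, X = x *m x^T].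

Definition convhull (A : set M) : set M :=
  [set X | exists (k : nat) (lam : 'I_k -> R) (Y : 'I_k -> M),
      (forall i, 0 <= lam i) /\ \sum_(i < k) lam i = 1 /\
      (forall i, A (Y i)) /\ X = \sum_(i < k) lam i *: Y i].

Definition ROG (S : set M) : Prop := S = convhull (S `&` rank_one_set).

Definition qcqp_feas (Ms : set M) (B : M) : set 'cV[R]_n :=
  [set x | (forall A, Ms A -> 0 <= qform A x) /\ qform B x = 1].

Definition sdp_feas (Ms : set M) (B : M) : set M :=
  [set X | (forall A, Ms A -> 0 <= frob A X) /\ frob B X = 1 /\ psd X].

(* optimal values, in the extended reals (inf of empty set = +oo) *)
Definition qcqp_val (Ms : set M) (B M0 : M) : \bar R :=
  ereal_inf [set (qform M0 x)%:E | x in qcqp_feas Ms B].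

Definition sdp_val (Ms : set M) (B M0 : M) : \bar R :=
  ereal_inf [set (frob M0 X)%:E | X in sdp_feas Ms B].

End Defs.

From HB Require Import structures.
From mathcomp Require Import all_boot all_order all_algebra.
From mathcomp Require Import all_classical all_reals ereal.
From mathcomp Require Import lra.
Set Implicit Arguments. Unset Strict Implicit. Unset Printing Implicit Defensive.
Import Order.TTheory GRing.Theory Num.Theory.
Local Open Scope ring_scope.
Local Open Scope classical_set_scope.

(* Weak duality [sdp_val <= qcqp_val] holds because [x x^T] is SDP-feasible
   for every QCQP-feasible [x].  Conversely, write an SDP-feasible [X] as a
   convex combination of rank-one points [Y_i = x_i x_i^T] of the cone
   [S(M)], with [b_i = <B, Y_i>] and [m_i = <M0, Y_i>], so that
   [sum_i lam_i b_i = 1].  Boundedness of the SDP forces [<M0, Z> >= 0] on its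
   recession cone [{Z in S(M) | <B, Z> = 0}], which contains
   [b_j Y_i - b_i Y_j] whenever [b_i <= 0 < b_j].  Hence the smallest ratio
   [r = m_j / b_j] over the [b_j > 0] satisfies [r b_i <= m_i] for all [i],
   so [<M0, X> >= r], and [r] is attained by the QCQP at [x_j / sqrt b_j]. *)

Section Frobenius.
Variables (R : realType) (n : nat).
Implicit Types (A X Y : 'M[R]_n) (x : 'cV[R]_n).

Lemma frobDl A X Y : frob (X + Y) A = frob X A + frob Y A.
Proof. by rewrite /frob mulmxDl mxtraceD. Qed.

Lemma frobZl A (a : R) X : frob (a *: X) A = a * frob X A.
Proof. by rewrite /frob -scalemxAl mxtraceZ. Qed.

Lemma frobDr A X Y : frob A (X + Y) = frob A X + frob A Y.
Proof. by rewrite /frob mulmxDr mxtraceD. Qed.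

Lemma frobZr A (a : R) X : frob A (a *: X) = a * frob A X.
Proof. by rewrite /frob -scalemxAr mxtraceZ. Qed.

Lemma frob_sumr A k (lam : 'I_k -> R) (Y : 'I_k -> 'M[R]_n) :
  frob A (\sum_(i < k) lam i *: Y i) = \sum_(i < k) lam i * frob A (Y i).
Proof.
by rewrite /frob mulmx_sumr raddf_sum; apply: eq_bigr => i _; rewrite -frobZr.
Qed.

Lemma qform_frob A x : qform A x = frob A (x *m x^T).
Proof. by rewrite /frob /qform mulmxA mxtrace_mulC mulmxA trace_mx11. Qed.

Lemma norm_frob_le A X (r : R) : (forall i j, `|X i j| <= r) ->
  `|frob A X| <= \sum_i \sum_j `|A i j| * r.
Proof.
move=> Xr; rewrite /frob /mxtrace.
apply: (le_trans (ler_norm_sum _ _ _)); apply: ler_sum => i _; rewrite mxE.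
apply: (le_trans (ler_norm_sum _ _ _)); apply: ler_sum => j _.
by rewrite normrM ler_wpM2l.
Qed.

Lemma psdD X Y : psd X -> psd Y -> psd (X + Y).
Proof.
move=> [sX pX] [sY pY]; split; first by rewrite /symmx linearD /= sX sY.
by move=> x; rewrite qform_frob frobDl -!qform_frob addr_ge0.
Qed.

Lemma psdZ (a : R) X : 0 <= a -> psd X -> psd (a *: X).
Proof.
move=> a0 [sX pX]; split; first by rewrite /symmx linearZ /= sX.
by move=> x; rewrite qform_frob frobZl -qform_frob mulr_ge0.
Qed.

Lemma psd_outer x : psd (x *m x^T).
Proof.
split=> [|y]; first by rewrite /symmx trmx_mul trmxK.
rewrite /qform.
have -> : y^T *m (x *m x^T) *m y = (y^T *m x) *m (y^T *m x)^T.
  by rewrite trmx_mul trmxK !mulmxA.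
by rewrite mxE big_ord1 [(y^T *m x)^T _ _]mxE -expr2 sqr_ge0.
Qed.

End Frobenius.

Lemma exists_min_ratio (R : realFieldType) k (b m : 'I_k -> R) j0 :
  0 < b j0 -> (forall i j, b i <= 0 -> 0 < b j -> b i * m j <= b j * m i) ->
  exists2 j, 0 < b j & forall i, m j / b j * b i <= m i.
Proof.
move=> bj0 mix.
have [j bj minj] := @arg_minP _ R _ j0 (fun i => 0 < b i) (fun i => m i / b i) bj0.
exists j => // i; have [bi|bi] := ltrP 0 (b i).
  by rewrite -ler_pdivlMr // minj.
by rewrite mulrAC ler_pdivrMr // mulrC [m i * _]mulrC mix.
Qed.

Section RankOneGeneratedCone.
Variables (R : realType) (n : nat) (Ms : set 'M[R]_n) (B M0 : 'M[R]_n).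
Implicit Types (X Y Z : 'M[R]_n).

Lemma SconeD X Y : Scone Ms X -> Scone Ms Y -> Scone Ms (X + Y).
Proof.
move=> [pX cX] [pY cY]; split; first exact: psdD.
by move=> A MA; rewrite frobDr addr_ge0 ?cX ?cY.
Qed.

Lemma SconeZ (a : R) X : 0 <= a -> Scone Ms X -> Scone Ms (a *: X).
Proof.
move=> a0 [pX cX]; split; first exact: psdZ.
by move=> A MA; rewrite frobZr mulr_ge0 ?cX.
Qed.

Lemma sdp_feas_Scone X : sdp_feas Ms B X -> Scone Ms X.
Proof. by case=> cX [_ pX]. Qed.

Lemma sdp_val_le_qcqp_val : (sdp_val Ms B M0 <= qcqp_val Ms B M0)%E.
Proof.
apply/ereal_infP => _ [x [cx Bx] <-].
apply: ereal_inf_lbound; exists (x *m x^T); last by rewrite qform_frob.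
split; first by move=> A MA; rewrite -qform_frob cx.
by split; [rewrite -qform_frob | exact: psd_outer].
Qed.

(* Moving from a feasible [X] along a direction [Z] of the recession cone
   stays feasible, so [<M0, Z> < 0] would make the objective unbounded. *)
Lemma frob_recession_ge0 (c : R) X Z :
  (forall Y, sdp_feas Ms B Y -> c <= frob M0 Y) -> sdp_feas Ms B X ->
  Scone Ms Z -> frob B Z = 0 -> 0 <= frob M0 Z.
Proof.
move=> lbM0 FX SZ BZ; rewrite leNgt; apply/negP => M0Z_lt0.
pose t := (frob M0 X - c + 1) / - frob M0 Z.
have t_ge0 : 0 <= t.
  by rewrite divr_ge0 ?oppr_ge0 ?ltW //; have := lbM0 _ FX; lra.
have FXZ : sdp_feas Ms B (X + t *: Z).
  case: FX => cX [BX pX]; case: SZ => pZ cZ; split; last split.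
  - by move=> A MA; rewrite frobDr frobZr addr_ge0 ?cX // mulr_ge0 ?cZ.
  - by rewrite frobDr frobZr BZ mulr0 addr0.
  - exact/psdD/psdZ.
have tM0Z : t * frob M0 Z = - (frob M0 X - c + 1).
  by rewrite -mulrA invrN mulNr mulVf ?lt_eqF // mulrN1.
by have := lbM0 _ FXZ; rewrite frobDr frobZr tM0Z; lra.
Qed.

Lemma qcqp_val_le_ratio Y : Scone Ms Y -> rank_one_set Y -> 0 < frob B Y ->
  (qcqp_val Ms B M0 <= (frob M0 Y / frob B Y)%:E)%E.
Proof.
move=> [_ cY] [x Yx] BY; subst Y; set s := (Num.sqrt (frob B (x *m x^T)))^-1.
have qform_sx A : qform A (s *: x) = (frob B (x *m x^T))^-1 * frob A (x *m x^T).
  rewrite qform_frob linearZ /= -scalemxAr -scalemxAl scalerA frobZr.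
  by rewrite -invfM -expr2 sqr_sqrtr ?ltW.
apply: ereal_inf_lbound; exists (s *: x); last by rewrite qform_sx mulrC.
split=> [A MA|]; last by rewrite qform_sx mulVf ?gt_eqF.
by rewrite qform_sx; apply: mulr_ge0; [rewrite invr_ge0 ltW | exact: cY].
Qed.

Lemma qcqp_val_le_sdp_val (c : R) : ROG (Scone Ms) ->
  (forall X, sdp_feas Ms B X -> c <= frob M0 X) ->
  (qcqp_val Ms B M0 <= sdp_val Ms B M0)%E.
Proof.
move=> rog lbM0; apply/ereal_infP => _ [X FX <-].
have := sdp_feas_Scone FX; rewrite rog => -[k [lam [Y [lam_ge0 [_ [SY EX]]]]]].
pose b i := frob B (Y i); pose m i := frob M0 (Y i).
have lam_b : \sum_(i < k) lam i * b i = 1.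
  by case: FX => _ [+ _]; rewrite EX frob_sumr.
have [j0 bj0] : exists j0, 0 < b j0.
  apply/existsP; apply: contraT; rewrite negb_exists => /forallP b_le0.
  suff : \sum_(i < k) lam i * b i <= 0 by rewrite lam_b ler10.
  by apply: sumr_le0 => i _; rewrite mulr_ge0_le0 // leNgt b_le0.
have mix i j : b i <= 0 -> 0 < b j -> b i * m j <= b j * m i.
  move=> bi bj; rewrite -subr_ge0.
  have -> : b j * m i - b i * m j = frob M0 (b j *: Y i + (- b i) *: Y j).
    by rewrite frobDr !frobZr mulNr.
  apply: (frob_recession_ge0 lbM0 FX).
    apply: SconeD; apply: SconeZ;
      [exact: ltW | exact: (SY i).1 | by rewrite oppr_ge0 | exact: (SY j).1].
  by rewrite frobDr !frobZr mulNr mulrC subrr.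
have [j bj min_j] := exists_min_ratio bj0 mix.
apply: (le_trans (qcqp_val_le_ratio (SY j).1 (SY j).2 bj)).
rewrite EX lee_fin frob_sumr -[X in X <= _]mulr1 -lam_b mulr_sumr.
by apply: ler_sum => i _; rewrite mulrCA ler_wpM2l.
Qed.

Lemma qcqp_val_eq_sdp_val (c : R) : ROG (Scone Ms) ->
  (forall X, sdp_feas Ms B X -> c <= frob M0 X) ->
  qcqp_val Ms B M0 = sdp_val Ms B M0.
Proof.
move=> rog lbM0; apply/le_anti.
by rewrite sdp_val_le_qcqp_val (qcqp_val_le_sdp_val rog lbM0).
Qed.

End RankOneGeneratedCone.

Theorem lemma5p2 (R : realType) (n : nat) (Ms : set 'M[R]_n) (B : 'M[R]_n) :
  (forall A, Ms A -> symmx A) -> symmx B ->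
  ROG (Scone Ms) ->
  (forall M0 : 'M[R]_n, symmx M0 ->
     (exists c : R, forall X, sdp_feas Ms B X -> c <= frob M0 X) ->
     qcqp_val Ms B M0 = sdp_val Ms B M0) /\
  ((exists r : R, forall X, sdp_feas Ms B X -> forall i j, `|X i j| <= r) ->
   forall M0 : 'M[R]_n, symmx M0 -> qcqp_val Ms B M0 = sdp_val Ms B M0).
Proof.
move=> _ _ rog; split=> [M0 _ [c lbM0] | [r Xr] M0 _].
  exact: qcqp_val_eq_sdp_val rog lbM0.
apply: (qcqp_val_eq_sdp_val (c := - \sum_i \sum_j `|M0 i j| * r) rog).
move=> X FX; rewrite lerNl (le_trans _ (norm_frob_le M0 (Xr X FX))) //.
by rewrite -normrN ler_norm.
Qed.
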